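(* In the mechanism $\mathcal{M}_{sCA}$, let $\mathbf{t}$ be the true types and $(A_1,\dots,A_n)$ a feasible allocation maximizing $\sum_i t_i(A_i)$. Let $\mathbf{d}$ be a separated profile of single-minded declarations $(S_j,t_j(S_j))$. If $\sum_{j\in R_i(\mathbf{d},A_i)}d_j(S_j)<\frac12 t_i(A_i)$, then any utility-maximizing undominated declaration $d_i$ for agent $i$ (against $\mathbf{d}_{-i}$) is a single-minded declaration for some set $S_i$ with $d_i(S_i)\ge\frac12 t_i(A_i)$.
   Context: $s$-CA problem: $n$ agents, items $M$; feasible allocations consist of pairwise disjoint sets each of size at most $s$. Agent $i$ has private monotone valuation $t_i$, $t_i(\emptyset)=0$. Single-minded declaration $(S,x)$: value $x$ on supersets of $S$, $0$ otherwise. Mechanism $\mathcal{M}_{sCA}$: (1) replace each declaration by $(S_i,d_i(S_i))$ with $S_i\in\arg\max_S d_i(S)$ (ties to smaller sets); (2) greedily, in decreasing order of declared value, tentatively allocate sets of size at most $s$ disjoint from previously allocated ones, giving $T_1,\dots,T_n$; (3) for each $i$ with $T_i\ne\emptyset$, if $d_i(T_i)\le\sum_{j\ne i:\,S_j\cap T_i\neq\emptyset}d_j(S_j)$ set $T_i=\emptyset$; (4) allocate $T_1,\dots,T_n$ and charge each winner his critical price (infimum value he could declare for his set and still win it). Utility = true value minus payment. Undominated strategies are the single-minded declarations $(S,t_i(S))$. Notation: $R_i(\mathbf{d},T)=\{j\ne i:S_j\cap T\ne\emptyset\}$, $Q_i(\mathbf{d},T)=\{j\in R_i(\mathbf{d},T):d_j(S_j)<t_i(T)\}$;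 $\mathbf{d}$ is separated if $\sum_{j\in Q_i(\mathbf{d},S_i)}d_j(S_j)\le d_i(S_i)$ for all $i$. *)

From mathcomp Require Import all_boot all_order all_algebra.
From mathcomp Require Import boolp classical_sets reals.
From mathcomp Require Import finset.
Set Implicit Arguments.
Unset Strict Implicit.
Unset Printing Implicit Defensive.
Import Order.TTheory GRing.Theory Num.Theory.
Local Open Scope ring_scope.

Section SCA.
Variables (R : realType) (M : finType) (n s : nat).

(* A (single-minded) declaration (S, x): value x on supersets of S. *)
Definition decl := ({set M} * R)%type.
Definition profile := 'I_n -> decl.

Definition sm_val (D : decl) (T : {set M}) : R :=
  if D.1 \subset T then D.2 else 0.

(* Step (1): replace by (S_i, d_i(S_i)) with S_i an argmax, ties to smaller
   sets.  For a single-minded declaration (S,x) with x > 0 the unique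
   smallest maximizer is S; if x <= 0 the empty set maximizes. *)
Definition dset (d : profile) (j : 'I_n) : {set M} :=
  if 0 < (d j).2 then (d j).1 else set0.
Definition dval (d : profile) (j : 'I_n) : R := (d j).2.

Definition greedy_le (d : profile) (j k : 'I_n) : bool :=
  (dval d k < dval d j) || ((dval d k == dval d j) && (j <= k)%N).
Definition greedy_order (d : profile) : seq 'I_n :=
  sort (greedy_le d) (enum 'I_n).

Definition greedy_step (d : profile)
    (acc : {set M} * {ffun 'I_n -> {set M}}) (j : 'I_n) :=
  let S := dset d j in
  if (#|S| <= s)%N && [disjoint S & acc.1]
  then (acc.1 :|: S, [ffun k => if k == j then S else acc.2 k])
  else acc.
Definition tentative (d : profile) : {ffun 'I_n -> {set M}} :=
  (foldl (greedy_step d) (set0, [ffun => set0]) (greedy_order d)).2.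

Definition Rset (d : profile) (i : 'I_n) (T : {set M}) : {set 'I_n} :=
  [set j | (j != i) && (dset d j :&: T != set0)].

Definition final_alloc (d : profile) (i : 'I_n) : {set M} :=
  let T := tentative d i in
  if (T != set0) && (sm_val (d i) T <= \sum_(j in Rset d i T) dval d j)
  then set0 else T.

Definition upd (d : profile) (i : 'I_n) (D : decl) : profile :=
  fun j => if j == i then D else d j.

Definition critical_price (d : profile) (i : 'I_n) : R :=
  inf [set x : R | final_alloc (upd d i (final_alloc d i, x)) i
                   = final_alloc d i].
Definition payment (d : profile) (i : 'I_n) : R :=
  if final_alloc d i != set0 then critical_price d i else 0.

Definition utility (t : 'I_n -> {set M} -> R) (d : profile) (i : 'I_n) : R :=
  t i (final_alloc d i) - payment d i.

Definition valuation (v : {set M} -> R) : Prop :=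
  v set0 = 0 /\ forall A B : {set M}, A \subset B -> v A <= v B.

Definition feasible (A : 'I_n -> {set M}) : Prop :=
  (forall i, (#|A i| <= s)%N) /\
  (forall i j, i != j -> [disjoint A i & A j]).

Definition optimal_alloc (t : 'I_n -> {set M} -> R) (A : 'I_n -> {set M}) :=
  feasible A /\
  forall B, feasible B -> \sum_i t i (B i) <= \sum_i t i (A i).

Definition Qset (t : 'I_n -> {set M} -> R) (d : profile) (i : 'I_n)
    (T : {set M}) : {set 'I_n} :=
  [set j in Rset d i T | dval d j < t i T].
Definition separated (t : 'I_n -> {set M} -> R) (d : profile) : Prop :=
  forall i, \sum_(j in Qset t d i (dset d i)) dval d j <= dval d i.

Definition undominated_decl (t : 'I_n -> {set M} -> R) (i : 'I_n)
    (S : {set M}) : decl := (S, t i S).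

Definition best_undominated (t : 'I_n -> {set M} -> R) (d : profile)
    (i : 'I_n) (S : {set M}) : Prop :=
  forall S' : {set M},
    utility t (upd d i (undominated_decl t i S')) i
      <= utility t (upd d i (undominated_decl t i S)) i.

End SCA.

From mathcomp Require Import all_boot all_order all_algebra.
From mathcomp Require Import boolp classical_sets reals.
From mathcomp Require Import finset.
From mathcomp Require Import lra.
Set Implicit Arguments.
Unset Strict Implicit.
Unset Printing Implicit Defensive.
Import Order.TTheory GRing.Theory Num.Theory.
Local Open Scope ring_scope.

(* Declaring (A_i, t_i(A_i)) wins A_i: every competitor overlapping A_i declares
   less than t_i(A_i)/2, so A_i comes first among its rivals in the greedy order
   and survives step (3).  For the same reason any bid above the total declared
   value of these rivals still wins A_i, so the critical price is at most
   t_i(A_i)/2 and the utility of this declaration is at least t_i(A_i)/2.  An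
   optimal undominated (S_i, t_i(S_i)) does at least as well, and since payments
   are nonnegative its utility never exceeds t_i(S_i). *)

Section Mechanism.
Variables (R : realType) (M : finType) (n s : nat).
Implicit Types (d : profile R M n) (i j k : 'I_n) (T : {set M}) (l : seq 'I_n)
  (acc : {set M} * {ffun 'I_n -> {set M}}).

Lemma valuation_ge0 (v : {set M} -> R) T : valuation v -> 0 <= v T.
Proof. by case=> v0 v_mono; rewrite -v0 v_mono ?sub0set. Qed.

Lemma foldl_greedy_step_cases d l acc k :
  (acc.2 k = set0 \/ acc.2 k = dset d k) ->
  let F := (foldl (greedy_step s d) acc l).2 k in F = set0 \/ F = dset d k.
Proof.
elim: l acc => [|j l IHl] acc //= acc_k; apply: IHl.
rewrite /greedy_step; case: ifP => //= _; rewrite ffunE.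
by case: eqP => [->|_]; [right|].
Qed.

Lemma final_alloc_cases d k :
  final_alloc s d k = set0 \/ final_alloc s d k = dset d k.
Proof.
rewrite /final_alloc; case: ifP => _; first by left.
by apply: foldl_greedy_step_cases; rewrite /= ffunE; left.
Qed.

Lemma final_alloc_sub d k : final_alloc s d k \subset (d k).1.
Proof.
have [->|->] := final_alloc_cases d k; first exact: sub0set.
by rewrite /dset; case: ifP => _; rewrite ?sub0set.
Qed.

Lemma upd_eq d i D : upd d i D i = D.
Proof. by rewrite /upd eqxx. Qed.

Lemma upd_upd d i D D' : upd (upd d i D) i D' = upd d i D'.
Proof. by apply: funext => j; rewrite /upd; case: (j == i). Qed.

Lemma upd_id d i : upd d i (d i) = d.
Proof. by apply: funext => j; rewrite /upd; case: eqP => [->|]. Qed.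

Lemma sum_Rset_upd d i D T :
  \sum_(j in Rset (upd d i D) i T) dval (upd d i D) j =
  \sum_(j in Rset d i T) dval d j.
Proof.
have -> : Rset (upd d i D) i T = Rset d i T.
  by apply/setP => j; rewrite !inE /dset /upd; case: (j == i).
apply: eq_bigr => j; rewrite inE => /andP[/negbTE ji _].
by rewrite /dval /upd ji.
Qed.

Lemma final_alloc_upd_gt0 d i T x :
  T != set0 -> final_alloc s (upd d i (T, x)) i = T -> 0 < x.
Proof.
move=> T0 win; have [F0|] := final_alloc_cases (upd d i (T, x)) i.
  by rewrite -win F0 eqxx in T0.
rewrite win /dset upd_eq /=; case: ifP => // _ T0'.
by rewrite T0' eqxx in T0.
Qed.

Lemma greedy_le_trans d : transitive (greedy_le d).
Proof.
move=> k j l; rewrite /greedy_le.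
move=> /orP[h1|/andP[/eqP e1 h1]] /orP[h2|/andP[/eqP e2 h2]]; apply/orP.
- by left; exact: lt_trans h2 h1.
- by left; rewrite e2.
- by left; rewrite -e1.
- by right; rewrite e2 e1 eqxx (leq_trans h1 h2).
Qed.

Lemma greedy_le_total d : total (greedy_le d).
Proof.
move=> j k; rewrite /greedy_le.
by have [||_] := ltgtP (dval d j) (dval d k); rewrite //= leq_total.
Qed.

Lemma pairwise_greedy_order d : pairwise (greedy_le d) (greedy_order d).
Proof.
rewrite -sorted_pairwise; last exact: greedy_le_trans.
exact/sort_sorted/greedy_le_total.
Qed.

Lemma foldl_greedy_step_notin d l acc k :
  k \notin l -> (foldl (greedy_step s d) acc l).2 k = acc.2 k.
Proof.
elim: l acc => [|j l IHl] acc //=; rewrite inE negb_or => /andP[kj kl].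
rewrite IHl // /greedy_step; case: ifP => //= _.
by rewrite ffunE (negbTE kj).
Qed.

Lemma foldl_greedy_step_disjoint d l acc T :
  {in l, forall j, [disjoint dset d j & T]} ->
  [disjoint acc.1 & T] -> [disjoint (foldl (greedy_step s d) acc l).1 & T].
Proof.
elim: l acc => [|j l IHl] acc //= disj acc_T.
apply: IHl => [k kl|]; first by apply: disj; rewrite inE kl orbT.
rewrite /greedy_step; case: ifP => //= _.
by rewrite !disjoints_subset subUset -!disjoints_subset acc_T disj ?mem_head.
Qed.

Lemma tentative_upd_win d i T x :
  0 < x -> (#|T| <= s)%N -> (forall j, j != i -> 0 <= dval d j) ->
  \sum_(j in Rset d i T) dval d j < x ->
  tentative s (upd d i (T, x)) i = T.
Proof.
set e := upd d i (T, x) => x_gt0 Ts d_ge0 sum_lt.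
have dval_i : dval e i = x by rewrite /dval /e upd_eq.
have dset_i : dset e i = T by rewrite /dset /e upd_eq /= x_gt0.
have rival_lt j : j \in Rset e i T -> dval e j < x.
  move=> jR; apply: le_lt_trans sum_lt; rewrite -(sum_Rset_upd d i (T, x)).
  rewrite (bigD1 j) //= lerDl; apply: sumr_ge0 => k /andP[+ _].
  by rewrite inE => /andP[ki _]; rewrite /dval /e /upd (negbTE ki) d_ge0.
have i_in : i \in greedy_order e by rewrite mem_sort mem_enum.
have := pairwise_greedy_order e; have := sort_uniq (greedy_le e) (enum 'I_n).
rewrite /tentative -/(greedy_order e) enum_uniq.
case/splitPr: i_in => s1 s2.
rewrite cat_uniq /= => /and3P[_ /norP[i_s1 _] /andP[i_s2 _]].
rewrite pairwise_cat allrel_consr => /and3P[/andP[before_i _] _ _].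
have s1_disj : {in s1, forall j, [disjoint dset e j & T]}.
  move=> j js1; rewrite -setI_eq0; apply: contraTT (allP before_i j js1) => meet.
  have j_lt : dval e j < x.
    by apply: rival_lt; rewrite inE meet andbT; apply: contraNneq i_s1 => <-.
  by rewrite /greedy_le dval_i negb_or -leNgt (ltW j_lt) (gt_eqF j_lt).
rewrite foldl_cat /= foldl_greedy_step_notin // /greedy_step dset_i Ts /=.
rewrite disjoint_sym foldl_greedy_step_disjoint //= ?ffunE ?eqxx //.
by rewrite disjoints_subset sub0set.
Qed.

Lemma final_alloc_upd_win d i T x :
  0 < x -> T != set0 -> (#|T| <= s)%N -> (forall j, j != i -> 0 <= dval d j) ->
  \sum_(j in Rset d i T) dval d j < x ->
  final_alloc s (upd d i (T, x)) i = T.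
Proof.
move=> x_gt0 T0 Ts d_ge0 sum_lt.
rewrite /final_alloc tentative_upd_win // T0 /sm_val upd_eq /= subxx sum_Rset_upd.
by rewrite leNgt sum_lt.
Qed.

Lemma winning_bids_lbound0 d i T :
  T != set0 -> lbound [set x | final_alloc s (upd d i (T, x)) i = T] 0.
Proof. by move=> T0 x /(final_alloc_upd_gt0 T0) /ltW. Qed.

Lemma critical_price_le d i T x y :
  T != set0 -> final_alloc s (upd d i (T, x)) i = T ->
  final_alloc s (upd d i (T, y)) i = T ->
  critical_price s (upd d i (T, x)) i <= y.
Proof.
move=> T0 win_x win_y; rewrite /critical_price win_x.
apply: ge_inf; last by rewrite /= upd_upd.
by exists 0; under eq_fun do rewrite upd_upd; exact: winning_bids_lbound0.
Qed.

Lemma payment_ge0 d i : 0 <= payment s d i.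
Proof.
rewrite /payment; case: ifPn => // F0; rewrite /critical_price.
apply: lb_le_inf; last exact: winning_bids_lbound0.
exists (d i).2 => /=.
have [F_eq|F_eq] := final_alloc_cases d i; first by rewrite F_eq eqxx in F0.
have F_decl : final_alloc s d i = (d i).1.
  by move: F0; rewrite F_eq /dset; case: ifP; rewrite ?eqxx.
by rewrite F_decl -surjective_pairing upd_id.
Qed.

Lemma utility_le_value (t : 'I_n -> {set M} -> R) d i :
  valuation (t i) -> utility s t d i <= t i (d i).1.
Proof.
case=> _ t_mono; rewrite /utility lerBlDr.
by apply: ler_wpDr (payment_ge0 d i) _; apply/t_mono/final_alloc_sub.
Qed.

End Mechanism.

Theorem proposition4p5 (R : realType) (M : finType) (n s : nat)
    (t : 'I_n -> {set M} -> R) (A : 'I_n -> {set M})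
    (S : 'I_n -> {set M}) (i : 'I_n) :
  (forall j, valuation (t j)) ->
  optimal_alloc s t A ->
  let d : profile R M n := fun j => (S j, t j (S j)) in
  separated t d ->
  \sum_(j in Rset d i (A i)) dval d j < t i (A i) / 2 ->
  forall Si : {set M}, best_undominated s t d i Si ->
    let di := undominated_decl t i Si in
    t i (A i) / 2 <= sm_val di Si.
Proof.
move=> t_val [[A_s _] _] d _ sum_lt Si best.
rewrite /undominated_decl /sm_val /= subxx.
set v := t i (A i) in sum_lt *.
have d_ge0 j : 0 <= dval d j by apply: valuation_ge0.
have sum_ge0 : 0 <= \sum_(j in Rset d i (A i)) dval d j by apply: sumr_ge0.
have v_gt0 : 0 < v by lra.
have A0 : A i != set0.
  by apply: contraTneq v_gt0 => A_eq; rewrite /v A_eq (proj1 (t_val i)) ltxx.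
pose wins y := final_alloc s (upd d i (A i, y)) i = A i.
have win y : v / 2 <= y -> wins y.
  by move=> y_ge; apply: final_alloc_upd_win => //; lra.
have u_A : v / 2 <= utility s t (upd d i (A i, v)) i.
  have [win_v win_half] : wins v /\ wins (v / 2) by split; apply: win; lra.
  have := critical_price_le A0 win_v win_half.
  by rewrite /utility /payment win_v A0 /= -/v; lra.
have := best (A i); have := utility_le_value s (upd d i (Si, t i Si)) (t_val i).
by rewrite upd_eq /undominated_decl -/v /=; lra.
Qed.
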